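(* Let $\Gamma$ be a finite alphabet and $D,\ell$ positive integers. Let $H:\Gamma^2\to\{0,1\}$ be distributed as a $(D,\ell)$-iterated pair-wise independent function. Then for any $ab\in\Gamma^2$, $\frac{1}{2D}\le\Pr_H[H(ab)=0]\le\frac{1}{D}$. Furthermore, for any $S\subseteq\Gamma^2$ with $|S|=\ell D$, $\Pr_H[\forall ab\in S,\ H(ab)\ne 0]\le 1/2^{\ell}$.
   Context: A family $\mathcal{H}$ of functions $h:U\to V$ is pair-wise independent if for all $u\ne u'$ in $U$ and $v,v'\in V$, $\Pr_h[h(u)=v\wedge h(u')=v']=1/|V|^2$ for $h$ uniform in $\mathcal{H}$. $H:\Gamma^2\to\{0,1\}$ is a $(D,\ell)$-iterated pair-wise independent function if it is obtained by selecting independently at random functions $h_1,\dots,h_\ell:\Gamma^2\to\{0,\dots,\ell D-1\}$, each from a pair-wise independent hash system, and setting $H(ab)=0$ if $\prod_{i=1}^{\ell}h_i(ab)=0$ and $H(ab)=1$ otherwise. *)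

From mathcomp Require Import all_boot all_order all_algebra.
Set Implicit Arguments. Unset Strict Implicit. Unset Printing Implicit Defensive.
Import Order.TTheory GRing.Theory Num.Theory.
Local Open Scope ring_scope.

Definition uprob (T : finType) (E : pred T) : rat := #|E|%:R / #|T|%:R.

(* A hash system: a finite (nonempty) index type K, each k : K naming a function
   fam k : U -> 'I_m; h uniform in the system means k uniform in K. *)
Definition pairwise_indep (U K : finType) (m : nat) (fam : K -> U -> 'I_m) : Prop :=
  (0 < #|K|)%N /\
  forall u u' : U, u != u' -> forall v v' : 'I_m,
    uprob (fun k : K => (fam k u == v) && (fam k u' == v')) = 1 / (m ^ 2)%:R.

(* The (D,l)-iterated function determined by the independent choices
   h_1, ..., h_l  (i.e. f : {ffun 'I_l -> K}, f i indexing h_(i+1)):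
   H(ab) = 0 if prod_i h_i(ab) = 0, and 1 otherwise. *)
Definition iterH (G K : finType) (D l : nat) (fam : K -> G * G -> 'I_(l * D))
    (f : {ffun 'I_l -> K}) (ab : G * G) : nat :=
  if (\prod_(i < l) (fam (f i) ab : nat))%N == 0%N then 0%N else 1%N.

From mathcomp Require Import all_boot all_order all_algebra.
From mathcomp Require Import ring lra zify.
Import Order.TTheory GRing.Theory Num.Theory.
Set Implicit Arguments. Unset Strict Implicit. Unset Printing Implicit Defensive.
Local Open Scope ring_scope.

(* Let p = 1/(lD).  A pair-wise independent hash is uniform at every point, so
   each h_i(ab) vanishes with probability p, independently for the l hashes,
   and Pr[H(ab) = 0] = 1 - (1 - p)^l.  Since lp = 1/D <= 1, Bernoulli's
   inequality and its counterpart (1 - p)^l <= 1 - lp/2 place this probability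
   between 1/(2D) and 1/D.
   For |S| = lD, let X count the points of S where one hash vanishes.
   Pair-wise independence gives E[X] = 1 and E[X^2] <= 2; averaging the
   pointwise inequality 3X <= 2[X <> 0] + X^2 yields Pr[X = 0] <= 1/2, and the
   independence of the l hashes turns this into 2^-l. *)

Lemma sum_nat_bool (T : finType) (E : pred T) : (\sum_x (E x : nat) = #|E|)%N.
Proof.
rewrite -sum1_card [RHS]big_mkcond; apply: eq_bigr => x _.
by rewrite unfold_in; case: (E x).
Qed.

Lemma uprob_eq_invn (T : finType) (E : pred T) n : (0 < #|T|)%N -> (0 < n)%N ->
  (uprob E = 1 / n%:R) <-> (#|E| * n = #|T|)%N.
Proof.
move=> T_gt0 n_gt0; rewrite /uprob; split => [/eqP|cardE].
  by rewrite eqr_div ?pnatr_eq0 -?lt0n // mul1r -natrM eqr_nat => /eqP.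
by apply/eqP; rewrite eqr_div ?pnatr_eq0 -?lt0n // mul1r -natrM cardE.
Qed.

Lemma eq_uprob (T : finType) (E E' : pred T) : E =1 E' -> uprob E = uprob E'.
Proof. by move=> eqE; rewrite /uprob (eq_card eqE). Qed.

Lemma uprobC (T : finType) (E : pred T) : (0 < #|T|)%N ->
  uprob (fun x => ~~ E x) = 1 - uprob E.
Proof.
move=> T_gt0; have T_neq0 : #|T|%:R != 0 :> rat by rewrite pnatr_eq0 -lt0n.
rewrite /uprob (eq_card (B := [predC E])) // -(cardC E) natrD in T_neq0 *.
by field.
Qed.

Lemma uprob_ffun_forall (I T : finType) (E : pred T) :
  uprob (fun f : {ffun I -> T} => [forall i, E (f i)]) = uprob E ^+ #|I|.
Proof.
rewrite /uprob card_ffun expr_div_n -!natrX -(card_ffun_on I E).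
by congr (_%:R / _); apply: eq_card => f; rewrite inE; apply/forallP/ffun_onP.
Qed.

Lemma expr1B_ge (R : realDomainType) (p : R) n :
  p <= 1 -> 1 - n%:R * p <= (1 - p) ^+ n.
Proof.
move=> p_le1; elim: n => [|n IHn]; first by rewrite mul0r subr0 expr0.
rewrite exprS -natr1.
have := ler_wpM2l (_ : 0 <= 1 - p) IHn.
have : 0 <= n%:R * p ^+ 2 :> R by rewrite mulr_ge0 ?ler0n ?sqr_ge0.
have : 0 <= 1 - p by rewrite subr_ge0.
rewrite expr2; nra.
Qed.

Lemma expr1B_le_half (R : realFieldType) (p : R) n : 0 <= p -> n%:R * p <= 1 ->
  (1 - p) ^+ n <= 1 - n%:R * p / 2.
Proof.
move=> p_ge0; elim: n => [|n IHn]; first by rewrite mul0r mul0r subr0 expr0.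
rewrite exprS -natr1 => np_le1.
have n_ge0 : 0 <= n%:R :> R by rewrite ler0n.
have {}IHn : (1 - p) ^+ n <= 1 - n%:R * p / 2 by apply: IHn; nra.
have : (1 - p) * (1 - p) ^+ n <= (1 - p) * (1 - n%:R * p / 2).
  by rewrite ler_wpM2l // subr_ge0; nra.
nra.
Qed.

Lemma second_moment_support (T : finType) (X : T -> nat) :
  (\sum_t X t ^ 2 <= 2 * \sum_t X t -> \sum_t X t <= 2 * #|[pred t | X t != 0]|)%N.
Proof.
have pointwise t : (3 * X t <= 2 * (X t != 0) + X t ^ 2)%N by case: (X t) => [|n] /=; nia.
have : (\sum_t 3 * X t <= \sum_t (2 * (X t != 0) + X t ^ 2))%N.
  by apply: leq_sum => t _; apply: pointwise.
rewrite -big_distrr big_split /= -big_distrr /= sum_nat_bool.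
by rewrite (eq_card (B := [pred t | X t != 0])) //; lia.
Qed.

Section PairwiseIndependentFamily.

Variables (U K : finType) (m : nat) (fam : K -> U -> 'I_m).
Hypothesis fam_pi : pairwise_indep fam.

Let K_gt0 : (0 < #|K|)%N. Proof. by case: fam_pi. Qed.

Lemma card_fam_pair u u' v v' : u != u' ->
  (#|[pred k | (fam k u == v) && (fam k u' == v')]| * m ^ 2 = #|K|)%N.
Proof.
move=> neq_uu'; apply/uprob_eq_invn => //.
  by rewrite expn_gt0 (leq_ltn_trans _ (ltn_ord v)).
exact: fam_pi.2.
Qed.

Variable v : 'I_m.

Let m_gt0 : (0 < m)%N. Proof. exact: leq_ltn_trans (ltn_ord v). Qed.

(* Pair-wise independence says nothing when U is a single point: the uniform
   marginal at u is obtained by summing the joint law with a second point u'. *)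
Hypothesis U_gt1 : (1 < #|U|)%N.

Lemma card_fam_eq u : (#|[pred k | fam k u == v]| * m = #|K|)%N.
Proof.
have [u' neq_uu'] : exists u', u != u'.
  have /card_gt0P[u' u'_neq_u] : (0 < #|predC1 u|)%N.
    by rewrite cardC1 -ltnS prednK // ltnW.
  by exists u'; rewrite eq_sym.
have fibers : #|[pred k | fam k u == v]| =
    (\sum_(v' < m) #|[pred k | (fam k u == v) && (fam k u' == v')]|)%N.
  rewrite -sum1_card (partition_big (fun k => fam k u') xpredT) //=.
  by apply: eq_bigr => v' _; rewrite -sum1_card.
apply/eqP; rewrite -(eqn_pmul2r m_gt0) -mulnA mulnn fibers big_distrl /=.
rewrite (eq_bigr (fun=> #|K|)) => [|v' _]; last exact: card_fam_pair.
by rewrite sum_nat_const card_ord mulnC.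
Qed.

Lemma uprob_fam_eq u : uprob (fun k => fam k u == v) = 1 / m%:R.
Proof. by apply/uprob_eq_invn; rewrite ?card_fam_eq. Qed.

Variable S : {set U}.
Hypothesis card_S : #|S| = m.

Let hits k := (\sum_(u in S) (fam k u == v))%N.

Lemma sum_hits : (\sum_k hits k = #|K|)%N.
Proof.
apply/eqP; rewrite -(eqn_pmul2r m_gt0) /hits exchange_big big_distrl /=.
rewrite (eq_bigr (fun=> #|K|)) => [|u _]; last first.
  by rewrite sum_nat_bool; exact: card_fam_eq.
by rewrite sum_nat_const card_S mulnC.
Qed.

Lemma sum_hits_sqr : (\sum_k hits k ^ 2 <= 2 * #|K|)%N.
Proof.
pose both k u w := (fam k u == v) && (fam k w == v).
have -> : (\sum_k hits k ^ 2 = \sum_(u in S) \sum_(w in S) #|[pred k | both k u w]|)%N.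
  rewrite (eq_bigr (fun k => \sum_(u in S) \sum_(w in S) both k u w)%N) => [|k _].
    rewrite exchange_big; apply: eq_bigr => u _.
    by rewrite exchange_big; apply: eq_bigr => w _; rewrite sum_nat_bool.
  rewrite -mulnn big_distrl; apply: eq_bigr => u _.
  by rewrite big_distrr; apply: eq_bigr => w _; exact: mulnb.
have row u : u \in S ->
    ((\sum_(w in S) #|[pred k | both k u w]|) * m ^ 2 <= 2 * m * #|K|)%N.
  move=> Su; rewrite (bigD1 u) //= mulnDl big_distrl /=.
  have -> : #|[pred k | both k u u]| = #|[pred k | fam k u == v]|.
    by apply: eq_card => k; rewrite !inE /both andbb.
  rewrite (eq_bigr (fun=> #|K|)) => [|w /andP[_ neq_wu]]; last first.
    by apply: card_fam_pair; rewrite eq_sym.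
  rewrite sum_nat_const; set others := (X in (_ + X * #|K|)%N).
  have : (others <= m)%N.
    by rewrite -card_S; apply: subset_leq_card; apply/subsetP => w /andP[].
  rewrite -mulnn mulnA card_fam_eq.
  (* #|K| now occurs under two convertible but syntactically different type
     annotations, which lia would read as distinct atoms. *)
  by move: #|K| => N /leq_mul/(_ (leqnn N)); lia.
rewrite -(@leq_pmul2r (m ^ 2)) ?expn_gt0 ?m_gt0 // big_distrl /=.
apply: (@leq_trans (\sum_(u in S) 2 * m * #|K|)%N); first exact: leq_sum.
rewrite sum_nat_const card_S.
by move: #|K| => N; rewrite -mulnn; lia.
Qed.

Lemma uprob_fam_avoid : uprob (fun k => [forall u in S, fam k u != v]) <= 1 / 2.
Proof.
have := @second_moment_support _ hits; rewrite sum_hits => /(_ sum_hits_sqr).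
have -> : #|[pred k | hits k != 0]| =
    #|[predC (fun k => [forall u in S, fam k u != v])]|.
  apply: eq_card => k; rewrite !inE /hits sum_nat_eq0; congr (~~ _).
  by apply: eq_forallb => u; case: (_ == v).
rewrite /uprob ler_pdivrMr ?ltr0n //.
rewrite -(cardC (fun k => [forall u in S, fam k u != v])).
by rewrite -(ler_nat rat) !natrD; lra.
Qed.

End PairwiseIndependentFamily.

Lemma iterH_neq0 (G K : finType) (D l : nat) (fam : K -> G * G -> 'I_(l * D))
    (f : {ffun 'I_l -> K}) (ab : G * G) :
  (iterH fam f ab != 0%N) = [forall i, (fam (f i) ab : nat) != 0%N].
Proof.
rewrite /iterH; have -> : (\prod_(i < l) fam (f i) ab == 0)%N =
    [exists i, (fam (f i) ab : nat) == 0%N].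
  rewrite prod_nat_seq_eq0.
  by apply/hasP/existsP => [[i _ zero_i]|[i zero_i]]; exists i; rewrite ?mem_index_enum.
by rewrite -negb_exists; case: [exists _, _].
Qed.

Section IteratedHash.

Variables (G K : finType) (D l : nat) (fam : K -> G * G -> 'I_(l * D)).
Hypotheses (fam_pi : pairwise_indep fam) (G_gt1 : (1 < #|G|)%N).
Hypotheses (D_gt0 : (0 < D)%N) (l_gt0 : (0 < l)%N).

Let K_gt0 : (0 < #|K|)%N. Proof. by case: fam_pi. Qed.

Let GG_gt1 : (1 < #|{: G * G}|)%N. Proof. by rewrite card_prod; nia. Qed.

Let lD_gt0 : (0 < l * D)%N. Proof. by rewrite muln_gt0 l_gt0. Qed.

Let zero : 'I_(l * D) := Ordinal lD_gt0.

Let iterH_neq0_zero f ab : (iterH fam f ab != 0%N) = [forall i, fam (f i) ab != zero].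
Proof. by rewrite iterH_neq0. Qed.

Lemma uprob_iterH_eq0 ab :
  uprob (fun f : {ffun 'I_l -> K} => iterH fam f ab == 0%N) =
  1 - (1 - 1 / (l * D)%:R) ^+ l.
Proof.
pose all_neq0 (f : {ffun 'I_l -> K}) := [forall i, fam (f i) ab != zero].
rewrite (@eq_uprob _ _ (fun f => ~~ all_neq0 f)) => [|f]; last first.
  by rewrite /all_neq0 -iterH_neq0_zero negbK.
rewrite uprobC ?card_ffun ?expn_gt0 ?K_gt0 //.
rewrite (@uprob_ffun_forall _ _ (fun k => fam k ab != zero)) card_ord.
by rewrite uprobC ?(uprob_fam_eq fam_pi _ GG_gt1).
Qed.

Lemma uprob_iterH_eq0_bounds ab :
  1 / (2 * D)%:R <= uprob (fun f : {ffun 'I_l -> K} => iterH fam f ab == 0%N)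
  /\ uprob (fun f : {ffun 'I_l -> K} => iterH fam f ab == 0%N) <= 1 / D%:R.
Proof.
rewrite uprob_iterH_eq0; set p : rat := 1 / (l * D)%:R.
have D_neq0 : D%:R != 0 :> rat by rewrite pnatr_eq0 -lt0n.
have lp : l%:R * p = 1 / D%:R.
  by rewrite /p natrM; field; rewrite D_neq0 pnatr_eq0 -lt0n.
have p_ge0 : 0 <= p by rewrite divr_ge0 ?ler0n.
have p_le1 : p <= 1 by rewrite ler_pdivrMr ?ltr0n // mul1r ler1n.
have lp_le1 : l%:R * p <= 1 by rewrite lp ler_pdivrMr ?ltr0n // mul1r ler1n.
have -> : 1 / (2 * D)%:R = l%:R * p / 2 by rewrite lp natrM; field.
have := expr1B_le_half p_ge0 lp_le1; have := expr1B_ge l p_le1.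
by rewrite -lp; lra.
Qed.

Lemma uprob_iterH_neq0_on (S : {set G * G}) : #|S| = (l * D)%N ->
  uprob (fun f : {ffun 'I_l -> K} => [forall ab in S, iterH fam f ab != 0%N])
  <= 1 / (2 ^ l)%:R.
Proof.
move=> card_S.
pose avoid k := [forall ab in S, fam k ab != zero].
rewrite (@eq_uprob _ _ (fun f : {ffun 'I_l -> K} => [forall i, avoid (f i)])) => [|f].
  rewrite uprob_ffun_forall card_ord.
  have -> : 1 / (2 ^ l)%:R = (1 / 2) ^+ l :> rat by rewrite expr_div_n expr1n natrX.
  apply: lerXn2r; rewrite ?nnegrE ?divr_ge0 ?ler0n //.
  exact: (uprob_fam_avoid fam_pi zero GG_gt1 card_S).
apply/forall_inP/forallP => [S_hit i | hit_S ab abS].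
  apply/forall_inP => ab abS.
  by have := S_hit ab abS; rewrite iterH_neq0_zero => /forallP.
by rewrite iterH_neq0_zero; apply/forallP => i; apply: (forall_inP (hit_S i)).
Qed.

End IteratedHash.

Theorem proposition6 (G : finType) (D l : nat) (K : finType)
    (fam : K -> G * G -> 'I_(l * D)) :
  (1 < #|G|)%N -> (0 < D)%N -> (0 < l)%N ->
  pairwise_indep fam ->
  (forall ab : G * G,
      1 / (2 * D)%:R <= uprob (fun f : {ffun 'I_l -> K} => iterH fam f ab == 0%N)
      /\ uprob (fun f : {ffun 'I_l -> K} => iterH fam f ab == 0%N) <= 1 / D%:R)
  /\
  (forall S : {set G * G}, #|S| = (l * D)%N ->
      uprob (fun f : {ffun 'I_l -> K} => [forall ab in S, iterH fam f ab != 0%N])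
      <= 1 / (2 ^ l)%:R).
Proof.
move=> G_gt1 D_gt0 l_gt0 fam_pi; split.
- exact: uprob_iterH_eq0_bounds.
- exact: uprob_iterH_neq0_on.
Qed.
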